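(* (1) Fix $\xi\in[0,0.13]$. Then both $\eta_\xi(y)$ and $\beta(y)$ are strictly decreasing in $y\in[\cos(2\pi/9),1)$. Consequently, if $y_i=\cos(2\pi/n_i)$ with integers $n_i\ge9$ for $i\in\{2,3,5,6\}$, then $\eta_\xi(y_i)\in[0,0.13]$ and $\beta(y_i)\in[1,2]$ for all $i\in\{2,3,5,6\}$. (2) Fix $y\in(0,1)$. Then $\eta_\xi(y)$ is strictly increasing in $\xi\in[0,\infty)$.
   Context: For $\xi\ge0$ and $y\in(0,1)$, $\eta_\xi(y)$ is the unique positive root $\delta$ of $(2+y)\delta^2+2(2+5y-(1+\xi)^2)\delta-4(1-y)(1+\xi)^2=0$, namely $$\eta_\xi(y)=\frac{-2-5y+(1+\xi)^2+\sqrt{(2+5y-(1+\xi)^2)^2+4(2+y)(1-y)(1+\xi)^2}}{2+y}.$$ Let $b(y)=\frac{16}{y+1}-7$, $c_n=\cos(2\pi/n)$, and $\beta(y)=b(y)$ for $y\in[c_{10},1]$, $\beta(y)=\frac{(2-b(c_{10}))b(y)-(2-b(c_9))b(c_{10})}{b(c_9)-b(c_{10})}$ for $y\in[c_9,c_{10}]$. *)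

From Stdlib Require Import Reals Lra.
Open Scope R_scope.

(* eta_xi(y): the unique positive root of the quadratic, given explicitly. *)
Definition eta (xi y : R) : R :=
  (-2 - 5*y + (1+xi)^2
   + sqrt ((2 + 5*y - (1+xi)^2)^2 + 4*(2+y)*(1-y)*(1+xi)^2)) / (2+y).

Definition bfun (y : R) : R := 16 / (y + 1) - 7.

Definition cn (n : nat) : R := cos (2 * PI / INR n).

(* beta, defined piecewise on [c_9, 1]; both pieces agree at y = c_10. *)
Definition beta (y : R) : R :=
  if Rle_dec (cn 10) y then bfun y
  else ((2 - bfun (cn 10)) * bfun y - (2 - bfun (cn 9)) * bfun (cn 10))
       / (bfun (cn 9) - bfun (cn 10)).

(* eta_xi(y) is the positive root of Q(d) = (2+y) d^2 + 2(2+5y-(1+xi)^2) d - 4(1-y)(1+xi)^2,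
   and for d > 0 the sign of Q(d) is the sign of d - eta_xi(y).  Since
   dQ/dy = d^2 + 10 d + 4(1+xi)^2 > 0 and dQ/d(1+xi)^2 = -(2d + 4(1-y)) < 0, evaluating the
   quadratic of one parameter at the root of another gives both monotonicity statements,
   and Q(0.13) >= 0 for xi <= 0.13, y >= 0.761 (cos(2 pi/9) = 0.766...) gives eta <= 0.13.  On
   [c_9, c_10) beta is b composed with the increasing affine map sending b(c_10) to itself
   and b(c_9) to 2, so beta decreases like b and takes values in [b(1), 2] = [1, 2]. *)
From Stdlib Require Import Reals Lra Psatz.
Open Scope R_scope.

Definition quad (p B M d : R) : R := p * d^2 + 2 * B * d - M.

Definition qroot (p B M : R) : R := (-B + sqrt (B^2 + p * M)) / p.

Section PositiveRoot.

Variables p B M : R.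
Hypothesis p_pos : 0 < p.
Hypothesis M_nonneg : 0 <= M.

Let s := sqrt (B^2 + p * M).

Lemma qroot_sqrt_facts : 0 <= s /\ s * s = B^2 + p * M /\ - s <= B <= s.
Proof.
  assert (Hdisc : 0 <= B^2 + p * M) by nra.
  assert (Hs : 0 <= s) by apply sqrt_pos.
  assert (Hss : s * s = B^2 + p * M) by (apply sqrt_sqrt; exact Hdisc).
  repeat split; [exact Hs | exact Hss | nra | nra].
Qed.

Lemma qroot_nonneg : 0 <= qroot p B M.
Proof.
  destruct qroot_sqrt_facts as (_ & _ & HB).
  apply Rmult_le_pos; [fold s; lra | left; apply Rinv_0_lt_compat, p_pos].
Qed.

Lemma qroot_pos : 0 < M -> 0 < qroot p B M.
Proof.
  intros HM. destruct qroot_sqrt_facts as (Hs & Hss & _).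
  apply Rdiv_lt_0_compat; [|exact p_pos]. fold s. nra.
Qed.

(* The other root is -(B + s)/p <= 0, so the second factor is positive for d > 0. *)
Lemma quad_factor_pos (d : R) : 0 < d ->
  exists k, 0 < k /\ quad p B M d = (d - qroot p B M) * k.
Proof.
  intros Hd. destruct qroot_sqrt_facts as (Hs & Hss & HB).
  exists (p * d + B + s). split; [nra|].
  unfold quad, qroot. fold s. field_simplify; [|lra].
  replace (s^2) with (s * s) by ring. rewrite Hss. field. lra.
Qed.

Lemma quad_qroot : quad p B M (qroot p B M) = 0.
Proof.
  destruct qroot_sqrt_facts as (_ & Hss & _).
  unfold quad, qroot. fold s. field_simplify; [|lra].
  replace (s^2) with (s * s) by ring. rewrite Hss. field. lra.
Qed.

Lemma qroot_lt_of_quad_pos (d : R) : 0 < d -> 0 < quad p B M d -> qroot p B M < d.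
Proof. intros Hd HQ. destruct (quad_factor_pos d Hd) as (k & Hk & E). nra. Qed.

Lemma qroot_le_of_quad_nonneg (d : R) : 0 < d -> 0 <= quad p B M d -> qroot p B M <= d.
Proof. intros Hd HQ. destruct (quad_factor_pos d Hd) as (k & Hk & E). nra. Qed.

Lemma lt_qroot_of_quad_neg (d : R) : 0 < d -> quad p B M d < 0 -> d < qroot p B M.
Proof. intros Hd HQ. destruct (quad_factor_pos d Hd) as (k & Hk & E). nra. Qed.

End PositiveRoot.

Definition eta_quad (xi y d : R) : R :=
  quad (2 + y) (2 + 5*y - (1+xi)^2) (4 * (1-y) * (1+xi)^2) d.

Lemma eta_qroot (xi y : R) :
  eta xi y = qroot (2 + y) (2 + 5*y - (1+xi)^2) (4 * (1-y) * (1+xi)^2).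
Proof.
  unfold eta, qroot.
  replace (4 * (2+y) * (1-y) * (1+xi)^2) with ((2+y) * (4 * (1-y) * (1+xi)^2)) by ring.
  f_equal. ring.
Qed.

Lemma eta_const_term_nonneg (xi y : R) : y <= 1 -> 0 <= 4 * (1-y) * (1+xi)^2.
Proof. intros Hy. apply Rmult_le_pos; [lra | apply pow2_ge_0]. Qed.

Lemma eta_const_term_pos (xi y : R) : 0 <= xi -> y < 1 -> 0 < 4 * (1-y) * (1+xi)^2.
Proof. intros Hxi Hy. apply Rmult_lt_0_compat; [lra | apply pow_lt; lra]. Qed.

Section EtaAsRoot.

Variables xi y : R.
Hypothesis y_range : -2 < y <= 1.

Lemma eta_quad_eta : eta_quad xi y (eta xi y) = 0.
Proof.
  rewrite eta_qroot. apply quad_qroot; [lra | apply eta_const_term_nonneg; lra].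
Qed.

Lemma eta_nonneg : 0 <= eta xi y.
Proof.
  rewrite eta_qroot. apply qroot_nonneg; [lra | apply eta_const_term_nonneg; lra].
Qed.

Lemma eta_lt_of_eta_quad_pos (d : R) : 0 < d -> 0 < eta_quad xi y d -> eta xi y < d.
Proof.
  rewrite eta_qroot. apply qroot_lt_of_quad_pos; [lra | apply eta_const_term_nonneg; lra].
Qed.

Lemma eta_le_of_eta_quad_nonneg (d : R) : 0 < d -> 0 <= eta_quad xi y d -> eta xi y <= d.
Proof.
  rewrite eta_qroot. apply qroot_le_of_quad_nonneg; [lra | apply eta_const_term_nonneg; lra].
Qed.

Lemma lt_eta_of_eta_quad_neg (d : R) : 0 < d -> eta_quad xi y d < 0 -> d < eta xi y.
Proof.
  rewrite eta_qroot. apply lt_qroot_of_quad_neg; [lra | apply eta_const_term_nonneg; lra].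
Qed.

End EtaAsRoot.

Lemma eta_pos (xi y : R) : 0 <= xi -> -2 < y < 1 -> 0 < eta xi y.
Proof.
  intros Hxi Hy. rewrite eta_qroot.
  apply qroot_pos; [lra | apply eta_const_term_nonneg; lra | apply eta_const_term_pos; lra].
Qed.

Lemma eta_decreasing_in_y (xi y1 y2 : R) :
  0 <= xi -> -2 < y1 -> y1 < y2 -> y2 <= 1 -> eta xi y2 < eta xi y1.
Proof.
  intros Hxi H1 H12 H2.
  set (d := eta xi y1).
  assert (Hd : 0 < d) by (apply eta_pos; lra).
  assert (Hroot : eta_quad xi y1 d = 0) by (apply eta_quad_eta; lra).
  assert (Hdiff : eta_quad xi y2 d - eta_quad xi y1 d
                  = (y2 - y1) * (d^2 + 10 * d + 4 * (1+xi)^2))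
    by (unfold eta_quad, quad; ring).
  apply eta_lt_of_eta_quad_pos; [lra | exact Hd | nra].
Qed.

Lemma eta_increasing_in_xi (y xi1 xi2 : R) :
  -2 < y < 1 -> 0 <= xi1 -> xi1 < xi2 -> eta xi1 y < eta xi2 y.
Proof.
  intros Hy H1 H12.
  set (d := eta xi1 y).
  assert (Hd : 0 < d) by (apply eta_pos; lra).
  assert (Hroot : eta_quad xi1 y d = 0) by (apply eta_quad_eta; lra).
  assert (Hdiff : eta_quad xi2 y d - eta_quad xi1 y d
                  = - ((1+xi2)^2 - (1+xi1)^2) * (2 * d + 4 * (1 - y)))
    by (unfold eta_quad, quad; ring).
  assert (Hsq : (1+xi1)^2 < (1+xi2)^2) by nra.
  apply lt_eta_of_eta_quad_neg; [lra | exact Hd | nra].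
Qed.

(* The margin is thin: at xi = 0.13, y = 0.761 the value of eta_quad at 0.13 is about 0.003. *)
Lemma eta_le_013 (xi y : R) : 0 <= xi <= 0.13 -> 0.761 <= y <= 1 -> eta xi y <= 0.13.
Proof.
  intros Hxi Hy. apply eta_le_of_eta_quad_nonneg; [lra | lra |].
  assert (Ha : 1 <= (1+xi)^2 <= 1.2769) by nra.
  assert (0 <= (y - 0.761) * (1.2769 - (1+xi)^2)) by nra.
  unfold eta_quad, quad. nra.
Qed.

Lemma PI_le_31421 : PI <= 3.1421.
Proof.
  destruct (PI_2_3_7_ineq 1) as [_ Hub].
  unfold tg_alt, PI_2_3_7_tg, Ratan_seq in Hub. simpl in Hub. lra.
Qed.

Lemma cos_ge_taylor6 (x u : R) : 0 <= x <= u -> u <= PI / 2 ->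
  1 - u^2/2 + u^4/24 - u^6/720 <= cos x.
Proof.
  intros Hx Hu. pose proof PI_RGT_0.
  destruct (cos_bound u 1) as [Hc _]; [lra | lra |].
  unfold cos_approx, cos_term in Hc. simpl in Hc.
  assert (cos u <= cos x) by (apply cos_decr_1; lra).
  lra.
Qed.

Lemma cn_9_ge : 0.761 <= cn 9.
Proof.
  pose proof PI2_3_2. pose proof PI_le_31421.
  unfold cn. replace (INR 9) with 9 by (simpl; ring).
  assert (H9 := cos_ge_taylor6 (2 * PI / 9) 0.69825 ltac:(lra) ltac:(lra)).
  lra.
Qed.

Lemma cn_10_ge : 0.78 <= cn 10.
Proof.
  pose proof PI2_3_2. pose proof PI_le_31421.
  unfold cn. replace (INR 10) with 10 by (simpl; ring).
  assert (H10 := cos_ge_taylor6 (2 * PI / 10) 0.6285 ltac:(lra) ltac:(lra)).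
  lra.
Qed.

Lemma cn_angle_range (n : nat) : (2 <= n)%nat -> 0 < 2 * PI / INR n <= PI.
Proof.
  intros Hn. pose proof PI_RGT_0.
  apply le_INR in Hn. simpl in Hn. split.
  - apply Rdiv_lt_0_compat; lra.
  - apply (Rmult_le_reg_r (INR n)); [lra|]. field_simplify; nra.
Qed.

Lemma cn_increasing (m n : nat) : (2 <= m)%nat -> (m < n)%nat -> cn m < cn n.
Proof.
  intros Hm Hmn. pose proof PI_RGT_0.
  pose proof (cn_angle_range m Hm). pose proof (cn_angle_range n ltac:(lia)).
  apply le_INR in Hm. apply lt_INR in Hmn. simpl in Hm.
  assert (2 * PI / INR n < 2 * PI / INR m)
    by (apply Rmult_lt_compat_l; [lra | apply Rinv_lt_contravar; nra]).
  unfold cn. apply cos_decreasing_1; lra.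
Qed.

Lemma cn_le (m n : nat) : (2 <= m)%nat -> (m <= n)%nat -> cn m <= cn n.
Proof.
  intros Hm Hmn. destruct (Nat.eq_dec m n) as [-> | Hne]; [lra|].
  left. apply cn_increasing; lia.
Qed.

Lemma cn_lt_1 (n : nat) : (2 <= n)%nat -> cn n < 1.
Proof.
  intros Hn. pose proof (cn_angle_range n Hn).
  unfold cn. rewrite <- cos_0. apply cos_decreasing_1; lra.
Qed.

Lemma bfun_decreasing (y1 y2 : R) : -1 < y1 -> y1 < y2 -> bfun y2 < bfun y1.
Proof.
  intros H1 H12. unfold bfun, Rdiv.
  assert (/ (y2 + 1) < / (y1 + 1)) by (apply Rinv_lt_contravar; nra).
  lra.
Qed.

Lemma bfun_nonincreasing (y1 y2 : R) : -1 < y1 -> y1 <= y2 -> bfun y2 <= bfun y1.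
Proof.
  intros H1 [H12 | ->]; [left; apply bfun_decreasing | right]; auto.
Qed.

Lemma bfun_1 : bfun 1 = 1.
Proof. unfold bfun. field. Qed.

(* b(y) < 2 exactly when y > 7/9. *)
Lemma bfun_cn_10_lt_2 : bfun (cn 10) < 2.
Proof.
  pose proof cn_10_ge. unfold bfun, Rdiv.
  assert (/ (cn 10 + 1) * (cn 10 + 1) = 1) by (apply Rinv_l; lra).
  nra.
Qed.

Definition affine_through (a b c t : R) : R := ((c - a) * t - (c - b) * a) / (b - a).

Lemma affine_through_fst (a b c : R) : a <> b -> affine_through a b c a = a.
Proof. intros Hab. unfold affine_through. field. lra. Qed.

Lemma affine_through_snd (a b c : R) : a <> b -> affine_through a b c b = c.
Proof. intros Hab. unfold affine_through. field. lra. Qed.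

Lemma affine_through_increasing (a b c t1 t2 : R) :
  a < b -> a < c -> t1 < t2 -> affine_through a b c t1 < affine_through a b c t2.
Proof.
  intros Hab Hac H12. unfold affine_through, Rdiv.
  apply Rmult_lt_compat_r; [apply Rinv_0_lt_compat; lra | nra].
Qed.

Lemma affine_through_nondecreasing (a b c t1 t2 : R) :
  a < b -> a < c -> t1 <= t2 -> affine_through a b c t1 <= affine_through a b c t2.
Proof.
  intros Hab Hac [H12 | ->]; [left; apply affine_through_increasing | right]; auto.
Qed.

Lemma beta_cases (y : R) : beta y =
  if Rle_dec (cn 10) y then bfun y
  else affine_through (bfun (cn 10)) (bfun (cn 9)) 2 (bfun y).
Proof. reflexivity. Qed.

Lemma cn_9_lt_cn_10 : cn 9 < cn 10.
Proof. apply cn_increasing; lia. Qed.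

Lemma bfun_cn_10_lt_bfun_cn_9 : bfun (cn 10) < bfun (cn 9).
Proof. pose proof cn_9_ge. pose proof cn_9_lt_cn_10. apply bfun_decreasing; lra. Qed.

Lemma beta_decreasing (y1 y2 : R) : cn 9 <= y1 -> y1 < y2 -> beta y2 < beta y1.
Proof.
  intros H1 H12. pose proof cn_9_ge.
  pose proof bfun_cn_10_lt_bfun_cn_9. pose proof bfun_cn_10_lt_2.
  rewrite !beta_cases.
  set (a := bfun (cn 10)) in *. set (b := bfun (cn 9)) in *.
  destruct (Rle_dec (cn 10) y2) as [E2|E2], (Rle_dec (cn 10) y1) as [E1|E1].
  - apply bfun_decreasing; lra.
  - assert (Hy2 : bfun y2 <= a) by (apply bfun_nonincreasing; lra).
    assert (Hy1 : a < bfun y1) by (apply bfun_decreasing; lra).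
    pose proof (affine_through_increasing a b 2 _ _ ltac:(lra) ltac:(lra) Hy1) as Hinc.
    rewrite affine_through_fst in Hinc by lra. lra.
  - lra.
  - apply affine_through_increasing; [lra | lra | apply bfun_decreasing; lra].
Qed.

Lemma beta_range (y : R) : cn 9 <= y <= 1 -> 1 <= beta y <= 2.
Proof.
  intros Hy. pose proof cn_9_ge. pose proof cn_10_ge.
  pose proof bfun_cn_10_lt_bfun_cn_9. pose proof bfun_cn_10_lt_2.
  assert (Hy1 : 1 <= bfun y) by (rewrite <- bfun_1; apply bfun_nonincreasing; lra).
  rewrite beta_cases.
  set (a := bfun (cn 10)) in *. set (b := bfun (cn 9)) in *.
  destruct (Rle_dec (cn 10) y) as [E|E].
  - assert (bfun y <= a) by (apply bfun_nonincreasing; lra). lra.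
  - assert (cn 10 <= 1) by apply COS_bound.
    assert (Ha : 1 <= a) by (rewrite <- bfun_1; apply bfun_nonincreasing; lra).
    assert (Hlo : a <= bfun y) by (apply bfun_nonincreasing; lra).
    assert (Hhi : bfun y <= b) by (apply bfun_nonincreasing; lra).
    pose proof (affine_through_nondecreasing a b 2 _ _ ltac:(lra) ltac:(lra) Hlo) as Hl.
    pose proof (affine_through_nondecreasing a b 2 _ _ ltac:(lra) ltac:(lra) Hhi) as Hh.
    rewrite affine_through_fst in Hl by lra.
    rewrite affine_through_snd in Hh by lra.
    lra.
Qed.

Theorem lemma4p1 :
  (forall xi : R, 0 <= xi <= 0.13 ->
     (forall y1 y2 : R, cn 9 <= y1 -> y1 < y2 -> y2 < 1 -> eta xi y2 < eta xi y1) /\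
     (forall y1 y2 : R, cn 9 <= y1 -> y1 < y2 -> y2 < 1 -> beta y2 < beta y1) /\
     (forall n : nat, (9 <= n)%nat ->
        0 <= eta xi (cn n) <= 0.13 /\ 1 <= beta (cn n) <= 2)) /\
  (forall y : R, 0 < y < 1 ->
     forall xi1 xi2 : R, 0 <= xi1 -> xi1 < xi2 -> eta xi1 y < eta xi2 y).
Proof.
  pose proof cn_9_ge.
  split.
  - intros xi Hxi. split; [|split].
    + intros y1 y2 H1 H12 H2. apply eta_decreasing_in_y; lra.
    + intros y1 y2 H1 H12 _. now apply beta_decreasing.
    + intros n Hn. pose proof (cn_le 9 n ltac:(lia) Hn). pose proof (cn_lt_1 n ltac:(lia)).
      repeat split.
      * apply eta_nonneg; lra.
      * apply eta_le_013; lra.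
      * apply beta_range; lra.
      * apply beta_range; lra.
  - intros y Hy xi1 xi2 H1 H12. apply eta_increasing_in_xi; lra.
Qed.
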